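(* Let $G$ be a reaction network with $s$ species and $m$ reactions, with stoichiometric matrix $\mathcal{N}\in\mathbb{Z}^{s\times m}$, reactant matrix $\mathcal{X}\in\mathbb{Z}^{s\times m}$, and dimension $r:=\operatorname{rank}(\mathcal{N})$. (i) If there is no $\alpha\in\mathbb{R}^m_{>0}$ with $\mathcal{N}\alpha=\mathbf 0$, then $G$ admits no positive steady state for any $\kappa\in\mathbb{R}^m_{>0}$. (ii) Suppose there exists $\alpha\in\mathbb{R}^m_{>0}$ with $\mathcal{N}\alpha=\mathbf 0$. Let $l^{(1)},\dots,l^{(t)}\in\mathbb{R}^m_{\ge0}$ be the extreme rays of the flux cone $\mathcal{F}(\mathcal{N})$, let $\lambda=(\lambda_1,\dots,\lambda_t)$ and $p=(p_1,\dots,p_s)$ be indeterminates, let $$J(p,\lambda):=\mathcal{N}\,\operatorname{diag}\Big(\sum_{i=1}^t\lambda_i l^{(i)}\Big)\,\mathcal{X}^\top\,\operatorname{diag}(p),$$ and let $$B(p,\lambda):=\sum_{I\subseteq\{1,\dots,s\},\ |I|=r}\det\big(J(p,\lambda)[I,I]\big)\in\mathbb{Q}[p,\lambda],$$ where $J[I,I]$ is the principal submatrix with rows and columns indexed by $I$. Then $G$ is degenerate if and only if $B(p,\lambda)$ is the zero polynomial; equivalently, $G$ admits at least one nondegenerate positive steady state (for some $\kappa\in\mathbb{R}^m_{>0}$) if and only if $B(p,\lambda)$ is not the zero polynomial.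
   Context: A reaction network $G$ has species $X_1,\dots,X_s$ and reactions $\mu_{1j}X_1+\dots+\mu_{sj}X_s\xrightarrow{\kappa_j}\nu_{1j}X_1+\dots+\nu_{sj}X_s$, $j=1,\dots,m$, with nonnegative integer coefficients, $(\mu_{1j},\dots,\mu_{sj})\neq(\nu_{1j},\dots,\nu_{sj})$, and rate constants $\kappa_j>0$. The stoichiometric matrix $\mathcal{N}$ has $(i,j)$-entry $\nu_{ij}-\mu_{ij}$; the reactant matrix $\mathcal{X}$ has $(i,j)$-entry $\mu_{ij}$; the stoichiometric subspace $S$ is the column space of $\mathcal{N}$. Under mass-action kinetics the dynamics are $\dot x=f(\kappa,x):=\mathcal{N}v(\kappa,x)$ with $v_j(\kappa,x)=\kappa_j\prod_{i=1}^s x_i^{\mu_{ij}}$. For $\kappa^*\in\mathbb{R}^m_{>0}$, a positive steady state is $x^*\in\mathbb{R}^s_{>0}$ with $f(\kappa^*,x^* )=\mathbf 0$; it is degenerate if the image of the Jacobian $\operatorname{Jac}_f(\kappa^*,x^* )$ restricted to $S$ is not all of $S$. The network $G$ is called degenerate if all of its positive steady states (over all $\kappa\in\mathbb{R}^m_{>0}$) are degenerate, and nondegenerate if it admits at least one nondegenerate positive steady state. The flux cone is $\mathcal{F}(\mathcal{N}):=\{\alpha\in\mathbb{R}^m_{\ge0}:\mathcal{N}\alpha=\mathbf 0\}$. *)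

From HB Require Import structures.
From mathcomp Require Import all_boot all_order all_algebra.
From mathcomp Require Import mpoly.
From mathcomp Require Import reals.
Set Implicit Arguments. Unset Strict Implicit. Unset Printing Implicit Defensive.
Import Order.TTheory GRing.Theory Num.Theory.
Local Open Scope ring_scope.

Section ReactionNetwork.
Variables (R : realType) (s m : nat).
(* reactant coefficients mu i j and product coefficients nu i j *)
Variables (mu nu : 'M[nat]_(s, m)).

Definition stoich : 'M[R]_(s, m) := \matrix_(i, j) ((nu i j)%:R - (mu i j)%:R).
Definition reactant : 'M[R]_(s, m) := \matrix_(i, j) (mu i j)%:R.

Definition rate_poly (kappa : 'I_m -> R) (j : 'I_m) : {mpoly R[s]} :=
  (kappa j)%:MP * \prod_(i < s) ('X_i ^+ mu i j).

Definition f_poly (kappa : 'I_m -> R) (i : 'I_s) : {mpoly R[s]} :=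
  \sum_(j < m) stoich i j *: rate_poly kappa j.

Definition f_eval (kappa : 'I_m -> R) (x : 'I_s -> R) : 'cV[R]_s :=
  \col_i (f_poly kappa i).@[x].

Definition jac (kappa : 'I_m -> R) (x : 'I_s -> R) : 'M[R]_s :=
  \matrix_(i, k) (mderiv k (f_poly kappa i)).@[x].

Definition in_S (w : 'cV[R]_s) : Prop := exists a : 'cV[R]_m, w = stoich *m a.

Definition positive_steady_state (kappa : 'I_m -> R) (x : 'I_s -> R) : Prop :=
  (forall i, 0 < x i) /\ f_eval kappa x = 0.

Definition nondegenerate_at (kappa : 'I_m -> R) (x : 'I_s -> R) : Prop :=
  forall w : 'cV[R]_s, in_S w <->
    (exists y : 'cV[R]_s, in_S y /\ w = jac kappa x *m y).

Definition degenerate_at (kappa : 'I_m -> R) (x : 'I_s -> R) : Prop :=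
  ~ nondegenerate_at kappa x.

Definition network_degenerate : Prop :=
  forall (kappa : 'I_m -> R) (x : 'I_s -> R), (forall j, 0 < kappa j) ->
    positive_steady_state kappa x -> degenerate_at kappa x.

Definition network_nondegenerate : Prop :=
  exists (kappa : 'I_m -> R) (x : 'I_s -> R), (forall j, 0 < kappa j) /\
    positive_steady_state kappa x /\ nondegenerate_at kappa x.

Definition in_flux_cone (a : 'cV[R]_m) : Prop :=
  (forall j, 0 <= a j 0) /\ stoich *m a = 0.

Definition extreme_ray_gen (l : 'cV[R]_m) : Prop :=
  in_flux_cone l /\ l != 0 /\
  forall a b : 'cV[R]_m, in_flux_cone a -> in_flux_cone b -> l = a + b ->
    (exists c : R, 0 <= c /\ a = c *: l) /\ (exists c : R, 0 <= c /\ b = c *: l).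

Definition extreme_rays_of_flux_cone (t : nat) (l : 'I_t -> 'cV[R]_m) : Prop :=
  (forall k, extreme_ray_gen (l k)) /\
  (forall k k', k != k' -> ~ (exists c : R, 0 < c /\ l k = c *: l k')) /\
  (forall v, extreme_ray_gen v -> exists k c, 0 < c /\ v = c *: l k).

(* Polynomial ring in the indeterminates p_1..p_s, lambda_1..lambda_t *)
Definition pvar (t : nat) (i : 'I_s) : {mpoly R[s + t]} := 'X_(lshift t i).
Definition lvar (t : nat) (k : 'I_t) : {mpoly R[s + t]} := 'X_(rshift s k).

Definition Jpl (t : nat) (l : 'I_t -> 'cV[R]_m) : 'M[{mpoly R[s + t]}]_s :=
  map_mx (fun c => c%:MP) stoich
  *m diag_mx (\row_j (\sum_(k < t) lvar k * ((l k) j 0)%:MP))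
  *m (map_mx (fun c => c%:MP) reactant)^T
  *m diag_mx (\row_i pvar t i).

(* principal minor of A indexed by I (rows/cols in increasing order) *)
Definition principal_minor (T : comRingType) (n : nat) (A : 'M[T]_n)
    (I : {set 'I_n}) : T :=
  \det (\matrix_(a < #|I|, b < #|I|) A (@enum_val _ (mem I) a) (@enum_val _ (mem I) b)).

Definition Bpoly (t : nat) (l : 'I_t -> 'cV[R]_m) : {mpoly R[s + t]} :=
  \sum_(I : {set 'I_s} | #|I| == \rank stoich) principal_minor (Jpl l) I.

End ReactionNetwork.

(* At a positive steady state x the rate vector v(kappa, x) lies in the flux cone,
   hence is a nonnegative combination sum_k lambda_k l^(k) of its extreme rays, and
   the Jacobian is N diag(v) X^T diag(1/x) = J(1/x, lambda).  By Cauchy-Binet, the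
   image of J restricted to S is all of S iff the sum of the principal minors of
   J of size rank N is nonzero, i.e. iff B(1/x, lambda) <> 0.  Conversely, if B is
   a nonzero polynomial it does not vanish at some positive (p, lambda); since a
   strictly positive flux exists, every reaction occurs in some extreme ray, so
   v := sum_k lambda_k l^(k) is positive, and x := 1/p with
   kappa_j := v_j / x^(mu_j) is a nondegenerate positive steady state. *)

From HB Require Import structures.
From mathcomp Require Import all_boot all_order all_algebra.
From mathcomp Require Import mpoly.
From mathcomp Require Import reals.
From mathcomp Require Import fingroup perm.
From Stdlib Require Import Classical_Prop.
Import Order.TTheory GRing.Theory Num.Theory.
Local Open Scope ring_scope.

Set Implicit Arguments. Unset Strict Implicit. Unset Printing Implicit Defensive.

Lemma det_mulmx_ffun (R : comNzRingType) r s (D : 'M[R]_(r, s)) (C : 'M[R]_(s, r)) :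
  \det (D *m C) = \sum_(f : {ffun 'I_r -> 'I_s})
                    (\prod_i D i (f i)) * \det (\matrix_(i, j) C (f i) j).
Proof.
pose AB (sg : 'S_r) i k := D i k * C k (sg i).
transitivity (\sum_(sg : 'S_r) \sum_(f : {ffun 'I_r -> 'I_s})
                (-1) ^+ sg * \prod_i AB sg i (f i)).
  apply: eq_bigr => sg _; rewrite -big_distrr /= -(bigA_distr_bigA (AB sg)).
  by congr (_ * _); apply: eq_bigr => i _; rewrite mxE.
rewrite exchange_big; apply: eq_bigr => f _ /=.
rewrite /(\det _) big_distrr /=; apply: eq_bigr => sg _.
rewrite /AB big_split /= mulrCA; congr (_ * (_ * _)).
by apply: eq_bigr => i _; rewrite mxE.
Qed.

Section CauchyBinet.
Variables (R : comNzRingType) (r s : nat) (D : 'M[R]_(r, s)) (C : 'M[R]_(s, r)).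

Let term (f : {ffun 'I_r -> 'I_s}) : R :=
  (\prod_i D i (f i)) * \det (\matrix_(i, j) C (f i) j).

Lemma term_eq0_noninj (f : {ffun 'I_r -> 'I_s}) : ~~ injectiveb f -> term f = 0.
Proof.
case/injectivePn => i1 [i2 neq_i12 eq_f12].
by rewrite /term (determinant_alternate neq_i12) ?mulr0 // => j; rewrite !mxE eq_f12.
Qed.

(* The minor is [\det (D' *m C')] for the restrictions [C'], [D'] of [C], [D] to
   the range of [g]; expanding it reindexes the terms of [det_mulmx_ffun]. *)
Lemma det_submx_mulmx (g : 'I_r -> 'I_s) : injective g ->
  \det (\matrix_(a, b) (C *m D) (g a) (g b)) =
  \sum_(f : {ffun 'I_r -> 'I_s} | [forall i, f i \in codom g]) term f.
Proof.
move=> g_inj.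
have -> : \matrix_(a, b) (C *m D) (g a) (g b) =
          (\matrix_(a, k) C (g a) k) *m (\matrix_(k, b) D k (g b)).
  by apply/matrixP => a b; rewrite !mxE; apply: eq_bigr => k _; rewrite !mxE.
rewrite det_mulmx mulrC -det_mulmx det_mulmx_ffun.
pose comp (h : {ffun 'I_r -> 'I_r}) : {ffun 'I_r -> 'I_s} := [ffun i => g (h i)].
have comp_inj : injective comp.
  move=> h1 h2 /ffunP eq_h; apply/ffunP => i; apply: g_inj.
  by have := eq_h i; rewrite !ffunE.
have -> : \sum_(f : {ffun 'I_r -> 'I_s} | [forall i, f i \in codom g]) term f =
          \sum_(f in comp @: setT) term f.
  apply: eq_bigl => f; apply/forallP/imsetP => [f_g | [h _ ->] i].
    by exists [ffun i => iinv (f_g i)] => //; apply/ffunP => i; rewrite !ffunE f_iinv.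
  by rewrite ffunE codom_f.
rewrite big_imset /=; last by move=> ? ? _ _; apply: comp_inj.
apply: eq_big => [h|h _]; first by rewrite inE.
rewrite /term; congr (_ * _); first by apply: eq_bigr => i _; rewrite !mxE ffunE.
by congr (\det _); apply/matrixP => i j; rewrite !mxE ffunE.
Qed.

Lemma det_mx_cast n n' (eq_n : n = n') (F : 'I_n -> 'I_n -> R) :
  \det (\matrix_(a, b) F a b) =
  \det (\matrix_(a < n', b < n') F (cast_ord (esym eq_n) a) (cast_ord (esym eq_n) b)).
Proof.
by case: n' / eq_n; congr (\det _); apply/matrixP => a b; rewrite !mxE !cast_ord_id.
Qed.

Theorem cauchy_binet_principal_minors :
  \det (D *m C) = \sum_(I : {set 'I_s} | #|I| == r) principal_minor (C *m D) I.
Proof.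
rewrite det_mulmx_ffun (bigID (fun f : {ffun 'I_r -> 'I_s} => injectiveb f)) /=.
rewrite [X in _ + X]big1 ?addr0; last by move=> f /term_eq0_noninj.
rewrite (partition_big (fun f : {ffun 'I_r -> 'I_s} => [set f i | i in 'I_r])
           (fun I : {set 'I_s} => #|I| == r)) /=; last first.
  by move=> f /injectiveP f_inj; rewrite card_imset // card_ord.
apply: eq_bigr => I /eqP card_I.
pose g a := @enum_val _ (mem I) (cast_ord (esym card_I) a).
have g_inj : injective g by move=> a b /enum_val_inj /cast_ord_inj.
have codom_g k : (k \in codom g) = (k \in I).
  apply/codomP/idP => [[a ->]|kI]; first exact: enum_valP.
  by exists (cast_ord card_I (enum_rank_in kI k)); rewrite /g cast_ordK enum_rankK_in.
rewrite /principal_minor (det_mx_cast card_I) (det_submx_mulmx g_inj).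
rewrite [RHS](bigID (fun f : {ffun 'I_r -> 'I_s} => injectiveb f)) /=.
rewrite [X in _ + X]big1 ?addr0; last by move=> f /andP[_ /term_eq0_noninj].
apply: eq_bigl => f; case f_inj: (injectiveb f); rewrite ?andbF ?andbT //=.
apply/eqP/forallP => [fI i | f_I]; first by rewrite codom_g -fI imset_f.
apply/eqP; rewrite eqEcard card_imset ?cardsT ?card_ord ?card_I; last exact/injectiveP.
by rewrite leqnn andbT; apply/subsetP => k /imsetP [i _ ->]; rewrite -codom_g.
Qed.

End CauchyBinet.

Lemma principal_minor_map (A B : comNzRingType) (f : {rmorphism A -> B}) n (M : 'M[A]_n) I :
  f (principal_minor M I) = principal_minor (map_mx f M) I.
Proof.
by rewrite /principal_minor -det_map_mx; congr (\det _); apply/matrixP => a b; rewrite !mxE.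
Qed.

Lemma mulmx_onto_iff_det_neq0 (F : fieldType) n (M : 'M[F]_n) :
  (forall b : 'cV_n, exists c, b = M *m c) <-> \det M != 0.
Proof.
split=> [M_onto | detM b]; last first.
  have M_unit : M \in unitmx by rewrite unitmxE unitfE.
  by exists (invmx M *m b); rewrite mulmxA mulmxV // mul1mx.
apply/negP => /det0P [u /matrix0Pn [z [i]]]; rewrite [z]ord1 => u_i uM.
have [c e_i] := M_onto (delta_mx i 0).
have := congr1 (mulmx u) e_i; rewrite mulmxA uM mul0mx => /matrixP/(_ 0 0).
rewrite !mxE (bigD1 i) //= big1 ?addr0 => [|k /negbTE k_i]; last by rewrite mxE k_i mulr0.
by rewrite mxE !eqxx mulr1 => /eqP; rewrite (negbTE u_i).
Qed.

Lemma colspace_onto_iff_principal_minors (F : fieldType) s m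
    (N : 'M[F]_(s, m)) (M : 'M[F]_(m, s)) :
  (forall w : 'cV_s, (exists a : 'cV_m, w = N *m a) <->
     (exists y : 'cV_s, (exists a : 'cV_m, y = N *m a) /\ w = (N *m M) *m y))
  <-> \sum_(I : {set 'I_s} | #|I| == \rank N) principal_minor (N *m M) I != 0.
Proof.
set C := col_base N; set E := row_base N.
have NCE p (X : 'M_(m, p)) : N *m X = C *m (E *m X) by rewrite mulmxA mulmx_base.
have C_inj := row_full_inj (col_base_full N).
have [E' EE'] := row_freeP (row_base_free N).
have colspaceE (w : 'cV_s) : (exists a, w = N *m a) <-> exists b, w = C *m b.
  split=> [[a ->]|[b ->]]; first by exists (E *m a); rewrite NCE.
  by exists (E' *m b); rewrite NCE (mulmxA E) EE' mul1mx.
have -> : \sum_(I : {set 'I_s} | #|I| == \rank N) principal_minor (N *m M) I =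
          \det ((E *m M) *m C) by rewrite cauchy_binet_principal_minors -NCE.
rewrite -mulmx_onto_iff_det_neq0.
split=> [onto b | onto w].
  have [|y [/colspaceE [c ->] Cb]] := (onto (C *m b)).1; first by apply/colspaceE; exists b.
  by exists c; apply: C_inj; rewrite Cb NCE !mulmxA.
split=> [/colspaceE [b ->] | [y [_ ->]]]; last by exists (M *m y); rewrite mulmxA.
have [c ->] := onto b; exists (C *m c); split; first by apply/colspaceE; exists c.
by rewrite NCE !mulmxA.
Qed.

Section KernelCone.
Variables (R : realFieldType) (s m : nat) (N : 'M[R]_(s, m)).

Definition in_kernel_cone (a : 'cV[R]_m) : Prop :=
  (forall j, 0 <= a j 0) /\ N *m a = 0.

Definition is_extreme_ray (l : 'cV[R]_m) : Prop :=
  in_kernel_cone l /\ l != 0 /\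
  forall a b : 'cV[R]_m, in_kernel_cone a -> in_kernel_cone b -> l = a + b ->
    (exists c : R, 0 <= c /\ a = c *: l) /\ (exists c : R, 0 <= c /\ b = c *: l).

Definition supp (v : 'cV[R]_m) : {set 'I_m} := [set j | v j 0 != 0].

Lemma supp_eq0 (v : 'cV[R]_m) : (supp v == set0) = (v == 0).
Proof.
apply/eqP/eqP => [supp0 | ->]; last by apply/setP => j; rewrite !inE mxE eqxx.
apply/matrixP => j z; rewrite ord1 mxE; apply/eqP.
by have := in_set0 j; rewrite -supp0 inE => /negbFE.
Qed.

Lemma supp_nonneg_addl (a b : 'cV[R]_m) : (forall j, 0 <= a j 0) -> (forall j, 0 <= b j 0) ->
  supp a \subset supp (a + b).
Proof.
move=> a_ge0 b_ge0; by apply/subsetP => j; rewrite !inE mxE; apply: contra; rewrite paddr_eq0 // => /andP[].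
Qed.

Lemma nonneg_shift_proper (v u : 'cV[R]_m) j0 :
  (forall j, 0 <= v j 0) -> supp u \subset supp v -> 0 < u j0 0 ->
  exists2 c, 0 < c &
    (forall j, 0 <= (v - c *: u) j 0) /\ supp (v - c *: u) \proper supp v.
Proof.
move=> v_ge0 /subsetP suv u_j0.
have [i u_i i_min] := arg_minP (fun j => v j 0 / u j 0) (u_j0 : (fun j => 0 < u j 0) j0).
have v_i : v i 0 != 0 by have := suv i; rewrite !inE gt_eqF //; apply.
have vi_gt0 : 0 < v i 0 by rewrite lt_def v_i v_ge0.
have shiftE j : (v - (v i 0 / u i 0) *: u) j 0 = v j 0 - v i 0 / u i 0 * u j 0.
  by rewrite !mxE.
exists (v i 0 / u i 0); first by rewrite divr_gt0.
split=> [j | ]; rewrite ?shiftE ?subr_ge0.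
  have [u_j | u_j] := ltP 0 (u j 0); first by rewrite -ler_pdivlMr // i_min.
  by apply: le_trans (v_ge0 j); rewrite mulr_ge0_le0 // divr_ge0 // ltW.
rewrite properE; apply/andP; split.
  apply/subsetP => j; rewrite !inE shiftE; apply: contraNneq => v_j.
  have : j \notin supp v by rewrite inE v_j eqxx.
  by move/(contra (suv j)); rewrite inE negbK v_j => /eqP ->; rewrite mulr0 subrr.
by apply/subsetPn; exists i; rewrite !inE ?v_i // shiftE divfK ?subrr ?eqxx // gt_eqF.
Qed.

Lemma extreme_ray_of_rigid (v : 'cV[R]_m) : in_kernel_cone v -> v != 0 ->
  (forall u, N *m u = 0 -> supp u \subset supp v -> exists c, u = c *: v) ->
  is_extreme_ray v.
Proof.
move=> v_cone v_nz rigid; split=> //; split=> //.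
have [j /[!inE] v_j] : exists j, j \in supp v by apply/set0Pn; rewrite supp_eq0.
have summand a b : in_kernel_cone a -> in_kernel_cone b -> v = a + b ->
    exists c, 0 <= c /\ a = c *: v.
  move=> [a_ge0 Na] [b_ge0 _] v_ab.
  have [c a_c] : exists c, a = c *: v.
    by apply: rigid Na _; rewrite v_ab; apply: supp_nonneg_addl.
  exists c; split=> //; have := a_ge0 j; rewrite a_c mxE pmulr_lge0 //.
  by rewrite lt_def v_j v_cone.1.
move=> a b a_cone b_cone v_ab; split; first exact: summand v_ab.
by apply: summand b_cone a_cone _; rewrite addrC.
Qed.

(* [u] witnesses that [v] is not extreme.  Moving [v] along [u] until a coordinate
   vanishes gives [w]; moving [v] along [w] in the same way gives [z]. *)
Lemma kernel_cone_split (v u : 'cV[R]_m) :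
  in_kernel_cone v -> N *m u = 0 -> supp u \subset supp v -> ~ (exists c, u = c *: v) ->
  exists z w c, [/\ in_kernel_cone z, in_kernel_cone w, 0 <= c & v = z + c *: w] /\
    (#|supp z| < #|supp v|)%N /\ (#|supp w| < #|supp v|)%N.
Proof.
wlog [j0 u_j0] : u / exists j0, 0 < u j0 0 => [hwlog v_cone Nu suv u_indep|].
  have u_nz : u != 0 by apply/eqP => u0; apply: u_indep; exists 0; rewrite u0 scale0r.
  have [j /[!inE] u_j] : exists j, j \in supp u by apply/set0Pn; rewrite supp_eq0.
  have [u_pos | u_neg] := ltP 0 (u j 0); first by apply: (hwlog u) => //; exists j.
  apply: (hwlog (- u)) => //.
  - by exists j; rewrite mxE oppr_gt0 lt_neqAle u_j.
  - by rewrite mulmxN Nu oppr0.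
  - apply/subsetP => i; rewrite [i \in supp _]inE mxE oppr_eq0 => u_i.
    by apply: (subsetP suv); rewrite inE.
  - by case=> c u_c; apply: u_indep; exists (- c); rewrite scaleNr -u_c opprK.
move=> [v_ge0 Nv] Nu suv u_indep.
have Nshift x y c : N *m x = 0 -> N *m y = 0 -> N *m (x - c *: y) = 0.
  by move=> Nx Ny; rewrite mulmxBr Nx -scalemxAr Ny scaler0 subrr.
have [c c_gt0 [w_ge0 sw]] := nonneg_shift_proper v_ge0 suv u_j0.
set w := v - c *: u in w_ge0 sw.
have Nw : N *m w = 0 by apply: Nshift.
have w_nz : w != 0.
  apply/eqP => /eqP; rewrite subr_eq0 => /eqP v_u; apply: u_indep.
  by exists c^-1; rewrite v_u scalerA mulVf ?scale1r // gt_eqF.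
have [j1 /[!inE] w_j1] : exists j, j \in supp w by apply/set0Pn; rewrite supp_eq0.
have w_j1_gt0 : 0 < w j1 0 by rewrite lt_def w_j1 w_ge0.
have [c2 c2_gt0 [z_ge0 sz]] := nonneg_shift_proper v_ge0 (proper_sub sw) w_j1_gt0.
exists (v - c2 *: w), w, c2; split; last by split; apply: proper_card.
split; [by split=> //; apply: Nshift | by [] | exact: ltW | by rewrite subrK].
Qed.

Theorem kernel_cone_conic_hull t (l : 'I_t -> 'cV[R]_m) :
  (forall v, is_extreme_ray v -> exists k c, 0 < c /\ v = c *: l k) ->
  forall v, in_kernel_cone v ->
    exists lam : 'I_t -> R, (forall k, 0 <= lam k) /\ v = \sum_k lam k *: l k.
Proof.
move=> l_rays v; have [n] := ubnP #|supp v|; elim: n v => // n IH v.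
rewrite ltnS => supp_v v_cone.
have [-> | v_nz] := eqVneq v 0.
  by exists (fun=> 0); split=> //; rewrite big1 // => k _; rewrite scale0r.
have [[u [Nu [suv u_indep]]] | rigid] :=
  classic (exists u, N *m u = 0 /\ supp u \subset supp v /\ ~ exists c, u = c *: v).
  have [z [w [c [[z_cone w_cone c_ge0 v_zw] [sz sw]]]]] :=
    kernel_cone_split v_cone Nu suv u_indep.
  rewrite v_zw; have [lz [lz_ge0 ->]] := IH z (leq_trans sz supp_v) z_cone.
  have [lw [lw_ge0 ->]] := IH w (leq_trans sw supp_v) w_cone.
  exists (fun k => lz k + c * lw k); split=> [k|]; first by rewrite addr_ge0 ?mulr_ge0.
  by rewrite scaler_sumr -big_split; apply: eq_bigr => k _; rewrite scalerDl scalerA.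
have [|k [c [c_gt0 ->]]] := l_rays v.
  apply: extreme_ray_of_rigid => // u Nu suv.
  by apply: NNPP => u_indep; apply: rigid; exists u.
exists (fun k' => if k' == k then c else 0); split=> [k'|]; first by case: eqP => // _; apply: ltW.
by rewrite (bigD1 k) //= eqxx big1 ?addr0 // => k' /negbTE ->; rewrite scale0r.
Qed.

Lemma pos_comb_extreme_rays_gt0 t (l : 'I_t -> 'cV[R]_m) (alpha : 'cV[R]_m) :
  (forall k, in_kernel_cone (l k)) ->
  (forall v, is_extreme_ray v -> exists k c, 0 < c /\ v = c *: l k) ->
  (forall j, 0 < alpha j 0) -> N *m alpha = 0 ->
  forall lam : 'I_t -> R, (forall k, 0 < lam k) ->
  forall j, 0 < (\sum_k lam k *: l k) j 0.
Proof.
move=> l_cone l_rays alpha_gt0 N_alpha lam lam_gt0 j.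
have l_ge0 k : 0 <= l k j 0 by have [] := l_cone k.
have [k l_kj] : exists k, 0 < l k j 0.
  apply/existsP; move: (alpha_gt0 j); apply: contraLR => /existsPn l_j0.
  have alpha_cone : in_kernel_cone alpha by split=> // i; apply: ltW.
  have [beta [_ ->]] := kernel_cone_conic_hull l_rays alpha_cone.
  rewrite summxE -leNgt big1 // => k _; rewrite mxE.
  have -> : l k j 0 = 0 by apply/le_anti; rewrite l_ge0 andbT leNgt l_j0.
  by rewrite mulr0.
rewrite summxE (bigD1 k) //= ltr_wpDr ?mxE ?mulr_gt0 //.
by apply: sumr_ge0 => i _; rewrite mxE mulr_ge0 // ltW.
Qed.
End KernelCone.

Section VanishingOnPositiveOrthant.
Variable R : realFieldType.

Lemma poly_eq0_on_pos (p : {poly R}) : (forall z, 0 < z -> p.[z] = 0) -> p = 0.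
Proof.
move=> p_pos0; apply: (@roots_geq_poly_eq0 _ p [seq i.+1%:R | i <- iota 0 (size p)]).
- by apply/allP => _ /mapP [i _ ->]; apply/rootP/p_pos0; rewrite ltr0Sn.
- by rewrite map_inj_uniq ?iota_uniq // => i j /eqP; rewrite eqr_nat => /eqP [].
- by rewrite size_map size_iota.
Qed.

Lemma lift_max_widen n (j : 'I_n) : lift ord_max j = widen_ord (leqnSn n) j.
Proof. by apply: val_inj; rewrite /= /bump leqNgt ltn_ord. Qed.

Lemma meval_muni n (p : {mpoly R[n.+1]}) (v : 'I_n.+1 -> R) :
  p.@[v] = (map_poly (meval (v \o widen_ord (leqnSn n))) (muni p)).[v ord_max].
Proof.
rewrite muniE rmorph_sum horner_sum mevalE; apply: eq_bigr => k _.
rewrite -!mul_polyC !rmorphM /= !map_polyC map_polyXn /= !hornerE.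
rewrite mevalZ mevalX big_ord_recr /= mulrA; congr (_ * _ * _).
by apply: eq_bigr => i _; rewrite mnmE.
Qed.

Lemma mnm_widen_eq n (k k' : 'X_{1..n.+1}) :
  ([multinom k (widen_ord (leqnSn n) i) | i < n] ==
   [multinom k' (widen_ord (leqnSn n) i) | i < n]) && (k ord_max == k' ord_max)
  = (k == k').
Proof.
apply/andP/eqP => [[/eqP eq_w /eqP eq_max]|->]; last by rewrite !eqxx.
apply/mnmP => i; case: (unliftP ord_max i) => [j ->|->] //.
by rewrite lift_max_widen; have := congr1 (fun k : 'X_{1..n} => k j) eq_w; rewrite !mnmE.
Qed.

Lemma mcoeff_muni n (p : {mpoly R[n.+1]}) (k : 'X_{1..n.+1}) :
  ((muni p)`_(k ord_max))@_[multinom k (widen_ord (leqnSn n) i) | i < n] = p@_k.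
Proof.
have -> : p@_k = \sum_(k' <- msupp p) p@_k' * (k' == k)%:R.
  have [k_p | k_p] := boolP (k \in msupp p).
    rewrite (bigD1_seq k) ?msupp_uniq //= eqxx mulr1 big1 ?addr0 // => k' /negbTE ->.
    by rewrite mulr0.
  rewrite memN_msupp_eq0 // big1_seq // => k' /andP[_ k'_p].
  by case: eqP k'_p => [-> | _]; rewrite ?mulr0 // (negbTE k_p).
rewrite muniE coef_sum raddf_sum /=; apply: eq_bigr => k' _.
rewrite coefZ coefXn mulr_natr mcoeffMn mcoeffZ mcoeffX -(mnm_widen_eq k' k).
by rewrite [k ord_max == _]eq_sym; do 2!case: (_ == _); rewrite ?mulr1 ?mulr0 ?mulr0n ?mulr1n.
Qed.

Lemma muni_eq0 n (p : {mpoly R[n.+1]}) : muni p = 0 -> p = 0.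
Proof. by move=> p0; apply/mpolyP => k; rewrite -mcoeff_muni p0 coef0 !mcoeff0. Qed.

Lemma mpoly_eq0_on_pos n (p : {mpoly R[n]}) :
  (forall v : 'I_n -> R, (forall i, 0 < v i) -> p.@[v] = 0) -> p = 0.
Proof.
elim: n p => [|n IH] p p_pos0.
  have := p_pos0 (fun=> 1) (fun=> ltr01).
  by rewrite (nvar0_mpolyC p) mevalC => ->; rewrite mpolyC0.
apply/muni_eq0/polyP => d; rewrite coef0; apply: IH => v' v'_gt0.
pose P := map_poly (meval v') (muni p).
suff P0 : P = 0 by have := congr1 (fun q : {poly R} => q`_d) P0; rewrite coef_map coef0.
apply: poly_eq0_on_pos => z z_gt0.
pose v i := if unlift ord_max i is Some j then v' j else z.
have -> : P = map_poly (meval (v \o widen_ord (leqnSn n))) (muni p).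
  apply: eq_map_poly => q; apply: meval_eq => i.
  by rewrite /v /= -lift_max_widen liftK.
have -> : z = v ord_max by rewrite /v unlift_none.
by rewrite -meval_muni p_pos0 // => i; rewrite /v; case: unliftP.
Qed.

End VanishingOnPositiveOrthant.

Section MassAction.
Variables (R : realType) (s m : nat) (mu nu : 'M[nat]_(s, m)).
Local Notation N := (stoich R mu nu).
Local Notation X := (reactant R mu).

(* [J(p, lambda)] of the paper, with [y] for [p] and [v] for [sum_k lambda_k l^(k)]. *)
Definition jacobian_form (v : 'cV[R]_m) (y : 'rV[R]_s) : 'M[R]_s :=
  N *m diag_mx v^T *m X^T *m diag_mx y.

Definition rate_vec (kappa : 'I_m -> R) (x : 'I_s -> R) : 'cV[R]_m :=
  \col_j (kappa j * \prod_i x i ^+ mu i j).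

Lemma meval_Jpl t (l : 'I_t -> 'cV[R]_m) (w : 'I_(s + t) -> R) :
  map_mx (meval w) (Jpl mu nu l) =
  jacobian_form (\sum_k w (rshift s k) *: l k) (\row_i w (lshift t i)).
Proof.
rewrite /Jpl /jacobian_form !map_mxM map_trmx !map_diag_mx.
have mevalC_mx p q (A : 'M[R]_(p, q)) : map_mx (meval w) (map_mx (fun c => c%:MP) A) = A.
  by apply/matrixP => i j; rewrite !mxE mevalC.
rewrite !mevalC_mx; congr (_ *m diag_mx _ *m _ *m diag_mx _); apply/matrixP => i j.
  rewrite !mxE rmorph_sum summxE; apply: eq_bigr => k _.
  by rewrite rmorphM /= mevalC /lvar mevalXU !mxE ord1.
by rewrite !mxE; apply: mevalXU.
Qed.

Lemma f_eval_rate_vec kappa x : f_eval mu nu kappa x = N *m rate_vec kappa x.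
Proof.
apply/matrixP => i z; rewrite ord1 !mxE /f_poly raddf_sum /=.
apply: eq_bigr => j _; rewrite mevalZ /rate_poly mevalM mevalC rmorph_prod !mxE.
by congr (_ * (_ * _)); apply: eq_bigr => k _; rewrite rmorphXn /= mevalXU.
Qed.

Lemma meval_mderiv_monomial (e : 'I_s -> nat) (x : 'I_s -> R) k : x k != 0 ->
  (mderiv k (\prod_i 'X_i ^+ e i)).@[x] =
  (e k)%:R * (\prod_i x i ^+ e i) * (x k)^-1.
Proof.
move=> x_k.
have -> : \prod_i 'X_i ^+ e i = 'X_[[multinom e i | i < s]] :> {mpoly R[s]}.
  by rewrite mpolyXE_id; apply: eq_bigr => i _; rewrite mnmE.
rewrite mderivX mevalZ mevalX mnmE.
have [-> | e_k] := posnP (e k); first by rewrite !mul0r.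
rewrite -mulrA; congr (_ * _); apply: (mulIf x_k); rewrite mulfVK //.
rewrite (bigD1 k) //= [RHS](bigD1 k) //= mulrAC; congr (_ * _).
  by rewrite mnmBE mnm1E eqxx mnmE subn1 -exprSr prednK.
by apply: eq_bigr => i ik; rewrite mnmBE mnm1E mnmE eq_sym (negbTE ik) subn0.
Qed.

Lemma jac_rate_vec kappa x : (forall i, x i != 0) ->
  jac mu nu kappa x = jacobian_form (rate_vec kappa x) (\row_i (x i)^-1).
Proof.
move=> x_nz; apply/matrixP => i k; rewrite /jac /jacobian_form !mul_mx_diag !mxE.
rewrite /f_poly [mderiv k _]raddf_sum raddf_sum /= mulr_suml; apply: eq_bigr => j _.
rewrite mderivZ mevalZ /rate_poly mderiv_mulC mevalM mevalC meval_mderiv_monomial //.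
by rewrite !mxE !mulrA [_ * _ * (mu k j)%:R]mulrAC [_ * (mu k j)%:R * _]mulrAC.
Qed.

Lemma nondegenerate_atE kappa x : (forall i, x i != 0) ->
  nondegenerate_at mu nu kappa x <->
  \sum_(I : {set 'I_s} | #|I| == \rank N)
     principal_minor (jacobian_form (rate_vec kappa x) (\row_i (x i)^-1)) I != 0.
Proof.
move=> x_nz; rewrite /nondegenerate_at /in_S jac_rate_vec // /jacobian_form -!mulmxA.
exact: colspace_onto_iff_principal_minors.
Qed.

Lemma meval_Bpoly t (l : 'I_t -> 'cV[R]_m) (w : 'I_(s + t) -> R) :
  (Bpoly mu nu l).@[w] = \sum_(I : {set 'I_s} | #|I| == \rank N)
     principal_minor (jacobian_form (\sum_k w (rshift s k) *: l k) (\row_i w (lshift t i))) I.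
Proof.
by rewrite /Bpoly rmorph_sum; apply: eq_bigr => I _; rewrite principal_minor_map meval_Jpl.
Qed.

Lemma rate_vec_gt0 kappa x : (forall j, 0 < kappa j) -> (forall i, 0 < x i) ->
  forall j, 0 < rate_vec kappa x j 0.
Proof.
move=> kappa_gt0 x_gt0 j; rewrite mxE mulr_gt0 // prodr_gt0 // => i _.
by rewrite exprn_gt0.
Qed.

Lemma no_positive_steady_state :
  (~ exists alpha : 'cV[R]_m, (forall j, 0 < alpha j 0) /\ N *m alpha = 0) ->
  forall (kappa : 'I_m -> R) (x : 'I_s -> R), (forall j, 0 < kappa j) ->
    ~ positive_steady_state mu nu kappa x.
Proof.
move=> no_alpha kappa x kappa_gt0 [x_gt0 f0]; apply: no_alpha.
by exists (rate_vec kappa x); rewrite -f_eval_rate_vec; split=> //; apply: rate_vec_gt0.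
Qed.

Lemma degenerate_of_Bpoly_eq0 t (l : 'I_t -> 'cV[R]_m) :
  (forall v, extreme_ray_gen mu nu v -> exists k c, 0 < c /\ v = c *: l k) ->
  Bpoly mu nu l = 0 -> network_degenerate R mu nu.
Proof.
move=> l_rays B0 kappa x kappa_gt0 [x_gt0 f0].
have rates_cone : in_kernel_cone N (rate_vec kappa x).
  split; last by rewrite -f_eval_rate_vec.
  by move=> j; apply/ltW/rate_vec_gt0.
have [lam [_ rates_lam]] := kernel_cone_conic_hull l_rays rates_cone.
rewrite /degenerate_at nondegenerate_atE => [|i]; last by rewrite gt_eqF.
pose w i := row_mx (\row_a (x a)^-1) (\row_k lam k) 0 i.
have := meval_Bpoly l w; rewrite B0 meval0.
have -> : \sum_k w (rshift s k) *: l k = rate_vec kappa x.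
  by rewrite rates_lam; apply: eq_bigr => k _; rewrite /w row_mxEr mxE.
have -> : \row_i w (lshift t i) = \row_i (x i)^-1.
  by apply/rowP => i; rewrite !mxE /w row_mxEl mxE.
by move=> <-; rewrite eqxx.
Qed.

Lemma nondegenerate_of_Bpoly_neq0 t (l : 'I_t -> 'cV[R]_m) (alpha : 'cV[R]_m) :
  (forall j, 0 < alpha j 0) -> N *m alpha = 0 ->
  (forall k, extreme_ray_gen mu nu (l k)) ->
  (forall v, extreme_ray_gen mu nu v -> exists k c, 0 < c /\ v = c *: l k) ->
  Bpoly mu nu l != 0 -> network_nondegenerate R mu nu.
Proof.
move=> alpha_gt0 N_alpha l_ext l_rays B_nz.
have [w [w_gt0 Bw]] : exists w, (forall i, 0 < w i) /\ (Bpoly mu nu l).@[w] != 0.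
  apply: NNPP => no_w; apply/(negP B_nz)/eqP/mpoly_eq0_on_pos => w w_gt0.
  by apply/eqP/negPn/negP => Bw; apply: no_w; exists w.
pose x i := (w (lshift t i))^-1.
pose v := \sum_k w (rshift s k) *: l k.
have x_gt0 i : 0 < x i by rewrite invr_gt0.
have v_gt0 : forall j, 0 < v j 0.
  exact: pos_comb_extreme_rays_gt0 (fun k => (l_ext k).1) l_rays alpha_gt0 N_alpha _ _.
have mono_gt0 j : 0 < \prod_i x i ^+ mu i j by apply: prodr_gt0 => i _; rewrite exprn_gt0.
pose kappa j := v j 0 / \prod_i x i ^+ mu i j.
have rates_v : rate_vec kappa x = v.
  by apply/matrixP => j z; rewrite ord1 mxE /kappa divfK ?gt_eqF.
exists kappa, x; split; first by move=> j; rewrite divr_gt0.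
split.
  split=> //; rewrite f_eval_rate_vec rates_v mulmx_sumr big1 // => k _.
  by rewrite -scalemxAr (l_ext k).1.2 scaler0.
apply/nondegenerate_atE => [i|]; first by rewrite gt_eqF.
have -> : \row_i (x i)^-1 = \row_i w (lshift t i) by apply/rowP => i; rewrite !mxE invrK.
by rewrite rates_v -meval_Bpoly.
Qed.

End MassAction.

Unset Implicit Arguments.

Theorem theorem1 (R : realType) (s m : nat) (mu nu : 'M[nat]_(s, m))
  (Hreac : forall j : 'I_m, col j mu != col j nu) :
  (* (i) *)
  ((~ exists alpha : 'cV[R]_m,
        (forall j, 0 < alpha j 0) /\ stoich R mu nu *m alpha = 0) ->
   forall (kappa : 'I_m -> R) (x : 'I_s -> R), (forall j, 0 < kappa j) ->
     ~ positive_steady_state mu nu kappa x)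
  /\
  (* (ii) *)
  ((exists alpha : 'cV[R]_m,
        (forall j, 0 < alpha j 0) /\ stoich R mu nu *m alpha = 0) ->
   forall (t : nat) (l : 'I_t -> 'cV[R]_m),
     extreme_rays_of_flux_cone mu nu l ->
     (network_degenerate R mu nu <-> Bpoly mu nu l = 0) /\
     (network_nondegenerate R mu nu <-> Bpoly mu nu l != 0)).
Proof.
split=> [|[alpha [alpha_gt0 N_alpha]] t l [l_ext [_ l_rays]]].
  exact: no_positive_steady_state.
have not_both : network_degenerate R mu nu -> ~ network_nondegenerate R mu nu.
  by move=> deg [kappa [x [kappa_gt0 [ss nd]]]]; exact: deg kappa x kappa_gt0 ss nd.
have B0_deg := degenerate_of_Bpoly_eq0 l_rays.
have Bnz_nondeg := nondegenerate_of_Bpoly_neq0 alpha_gt0 N_alpha l_ext l_rays.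
split; split; [move=> deg | exact: B0_deg | move=> nd | exact: Bnz_nondeg].
- by apply/eqP; apply: contraT => /Bnz_nondeg /(not_both deg).
- by apply/eqP => /B0_deg /not_both.
Qed.
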